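(* For any second-order Lagrangian $L$, the Hilbert forms satisfy $S^i\vartheta^m=\tfrac12 S^{im}\,dL$ for all $i,m\in\{1,2\}$; consequently $S^i\vartheta^m=S^m\vartheta^i$.
   Context: Let $E$ be a smooth manifold of dimension $n$ with local coordinates $(u^\alpha)$. For $k\ge 1$, $\mathcal F^k_{(2)}E$ denotes the bundle of $k$-th order 2-frames in $E$ (regular $k$-th order 2-velocities, i.e. $k$-jets at $0$ of maps $\mathbb R^2\to E$ of rank 2 at $0$), with induced coordinates $u^\alpha_{i_1\cdots i_s}$ ($0\le s\le k$, indices in $\{1,2\}$, totally symmetric in the subscripts). Pull-backs along the projections $\mathcal F^l_{(2)}E\to\mathcal F^k_{(2)}E$ are omitted. $\#(i_1\cdots i_s)$ denotes the number of distinct rearrangements of $(i_1,\dots,i_s)$; repeated indices in $\{1,2\}$ are summed. The total derivatives are the vector fields along $\mathcal F^{k+1}_{(2)}E\to\mathcal F^k_{(2)}E$ given by $\mathbf T_i=\sum_{s=0}^k \frac{1}{\#(i_1\cdots i_s)}u^\alpha_{i i_1\cdots i_s}\,\partial/\partial u^\alpha_{i_1\cdots i_s}$, and the vertical endomorphisms are the type $(1,1)$ tensor fields on $\mathcal F^{k+1}_{(2)}E$ given by $S^j=\sum_{s=0}^k \frac{s+1}{\#(i_1\cdots i_s)}\,\partial/\partial u^\alpha_{j i_1\cdots i_s}\otimes du^\alpha_{i_1\cdots i_s}$. The $S^i$ commute and $S^{i_1\cdots i_s}$ denotes their composite. On forms, $S^i$ acts as the degree-zero derivation $(S^i\omega)(X_1,\dots,X_r)=\sum_a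 \omega(X_1,\dots,S^iX_a,\dots,X_r)$ (zero on functions). Contraction with $\mathbf T_i$ is denoted $i_i$ and the Lie derivative $d_i=d\,i_i+i_i\,d$; the $d_i$ commute and $d_{j_1\cdots j_s}$ denotes their composite. A second-order Lagrangian is a smooth function $L$ on (an open subset of) $\mathcal F^2_{(2)}E$. Its Hilbert forms are the 1-forms $\vartheta^i=(S^i-\tfrac12 d_jS^{ji})\,dL$ on $\mathcal F^3_{(2)}E$. *)

From HB Require Import structures.
From mathcomp Require Import all_boot all_order all_algebra.
From mathcomp Require Import reals topology normedtype derive.
Set Implicit Arguments. Unset Strict Implicit. Unset Printing Implicit Defensive.
Import Order.TTheory GRing.Theory Num.Theory numFieldNormedType.Exports.
Local Open Scope ring_scope.

(* Local (chart) description of the bundles F^k_(2) E, E with n coordinates.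
   A point carries all induced coordinates u^alpha_{i_1..i_s}; by total
   symmetry of the subscripts the coordinate only depends on the multiset
   {i_1..i_s} of indices in {1,2}, encoded by (a,b) = (#1's, #2's).
   Thus  u^alpha_{i_1..i_s} = p alpha a b.  Functions on F^k are functions
   of points that only depend on the coordinates of order a+b <= k
   (pull-backs along the projections are omitted, as in the paper).
   The index set {1,2} is 'I_2 (0 <-> 1, 1 <-> 2). *)

Section Jets.
Variables (R : realType) (n : nat).

Definition pt := 'I_n -> nat -> nat -> R.

(* a 1-form, given by its coefficient on du^alpha_{(a,b)} at each point *)
Definition form := pt -> 'I_n -> nat -> nat -> R.

Definition c1 (t : seq 'I_2) : nat := count (fun i : 'I_2 => nat_of_ord i == 0%N) t.
Definition c2 (t : seq 'I_2) : nat := count (fun i : 'I_2 => nat_of_ord i == 1%N) t.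

Definition nrearr (t : seq 'I_2) : nat := size (permutations t).

Definition upd (p : pt) (al : 'I_n) (a b : nat) (x : R) : pt :=
  fun be c d => if (be == al) && (c == a) && (d == b) then x else p be c d.

Definition pd (f : pt -> R) (al : 'I_n) (a b : nat) (p : pt) : R :=
  derive1 (fun x : R => f (upd p al a b x)) (p al a b).

Definition dfun (f : pt -> R) : form := fun p al a b => pd f al a b p.

(* vertical endomorphism S^j on F^{k+1},
   S^j = sum_{s=0}^k (s+1)/#(i_1..i_s) d/du^al_{j i_1..i_s} (x) du^al_{i_1..i_s}
   (repeated indices summed over all sequences), acting on 1-forms as
   (S^j w)(X) = w(S^j X); written out on coefficients. *)
Definition Sop (k : nat) (j : 'I_2) (w : form) : form := fun p al a b =>
  \sum_(s < k.+1) \sum_(t : s.-tuple 'I_2)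
    (if (c1 t == a) && (c2 t == b)
     then (s.+1)%:R / (nrearr t)%:R * w p al (c1 (j :: t)) (c2 (j :: t))
     else 0).

(* components of the total derivative T_j (along F^{k+1} -> F^k):
   T_j = sum_{s=0}^k 1/#(i_1..i_s) u^al_{j i_1..i_s} d/du^al_{i_1..i_s};
   the component on d/du^al_{(a,b)} at p *)
Definition Tcomp (k : nat) (j : 'I_2) (p : pt) (al : 'I_n) (a b : nat) : R :=
  \sum_(s < k.+1) \sum_(t : s.-tuple 'I_2)
    (if (c1 t == a) && (c2 t == b)
     then (nrearr t)%:R^-1 * p al (c1 (j :: t)) (c2 (j :: t))
     else 0).

Definition Tapp (k : nat) (j : 'I_2) (f : pt -> R) (p : pt) : R :=
  \sum_(al < n) \sum_(s < k.+1) \sum_(t : s.-tuple 'I_2)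
    (nrearr t)%:R^-1 * p al (c1 (j :: t)) (c2 (j :: t)) * pd f al (c1 t) (c2 t) p.

(* Lie derivative d_j of a 1-form (on F^k) along T_j, in coordinates:
   (L_T w)_B = T(w_B) + sum_A w_A dT^A/du^B, A ranging over the
   coordinates of F^k (order a'+b' <= k). *)
Definition dop (k : nat) (j : 'I_2) (w : form) : form := fun p be a b =>
  Tapp k j (fun q => w q be a b) p
  + \sum_(al < n) \sum_(a' < k.+1) \sum_(b' < k.+1 - a')
      w p al a' b' * pd (fun q => Tcomp k j q al a' b') be a b p.

(* Hilbert forms of a second order Lagrangian (on F^3):
   theta^i = (S^i - 1/2 d_j S^{ji}) dL, summed over j *)
Definition hilbert (L : pt -> R) (i : 'I_2) : form := fun p al a b =>
  Sop 2 i (dfun L) p al a b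
  - 2^-1 * \sum_(j < 2) dop 2 j (Sop 2 j (Sop 2 i (dfun L))) p al a b.

Definition second_order (L : pt -> R) : Prop :=
  forall p q : pt, (forall al a b, (a + b <= 2)%N -> p al a b = q al a b) ->
    L p = L q.

End Jets.

From Pilot Require Import Defs.
From HB Require Import structures.
From mathcomp Require Import all_boot all_order all_algebra.
From mathcomp Require Import reals topology normedtype derive.
From mathcomp Require Import boolp functions zify ring.
Import GRing.Theory Num.Theory numFieldNormedType.Exports.
Local Open Scope ring_scope.

(* In coordinates each S^j is a weighted shift: the tuples with prescribed
   counts of 1's and 2's form a single permutation class, so the sum over
   them cancels the weight 1/#(i_1 ... i_s), and S^j multiplies the
   coefficient of order s by s+1 (by 0 beyond order k) and moves it to the
   multi-index with one more j.  In particular the S^j commute.  For a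
   second-order L, dL vanishes above order 2, hence S^j S^m dL lives in order
   0, where d_j merely shifts it back by one j (the only surviving term comes
   from the component u_j of T_j along d/du).  Summing over j recovers S^m dL
   at every positive order, so theta^m = 1/2 S^m dL there, and S^i only reads
   positive orders. *)

Lemma card_perm_tuples (T : finType) (s : nat) (t : seq T) : size t = s ->
  #|[pred u : s.-tuple T | perm_eq u t]| = size (permutations t).
Proof.
move=> size_t; rewrite cardE -(size_map val); apply: perm_size.
apply: uniq_perm; first by rewrite (map_inj_uniq val_inj) enum_uniq.
  exact: permutations_uniq.
move=> v; rewrite mem_permutations; apply/mapP/idP => [[u]|vt].
  by rewrite mem_enum => ut ->.
have size_v : size v == s by rewrite (perm_size vt) size_t.
by exists (Tuple size_v); rewrite ?mem_enum.
Qed.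

Lemma c1_add_c2 (t : seq 'I_2) : (c1 t + c2 t)%N = size t.
Proof. by elim: t => //= -[[|[|//]] ?] t <-; rewrite /= ?addnS. Qed.

Lemma count_I2 (P : pred 'I_2) (t : seq 'I_2) :
  count P t = (P ord0 * c1 t + P ord_max * c2 t)%N.
Proof.
elim: t => [|[[|[|//]] lti] t /= ->]; first by rewrite !muln0.
  rewrite (_ : Ordinal lti = ord0); last exact: val_inj.
  by case: (P ord0); case: (P ord_max) => /=; lia.
rewrite (_ : Ordinal lti = ord_max); last exact: val_inj.
by case: (P ord0); case: (P ord_max) => /=; lia.
Qed.

Lemma perm_eq_counts (t u : seq 'I_2) :
  perm_eq t u = (c1 t == c1 u) && (c2 t == c2 u).
Proof.
apply/permP/andP => [tu | [/eqP tu1 /eqP tu2] P]; first by rewrite /c1 /c2 !tu.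
by rewrite !count_I2 tu1 tu2.
Qed.

Section Coordinates.
Variables (R : realType) (n : nat).

Lemma sum_inv_nrearr (s a b : nat) :
  \sum_(t : s.-tuple 'I_2 | (c1 t == a) && (c2 t == b)) (nrearr t)%:R^-1
    = (a + b == s)%:R :> R.
Proof.
have [ab_s | ab_s] := eqVneq (a + b)%N s; last first.
  apply: big1 => t /andP[/eqP ta /eqP tb]; case/eqP: ab_s.
  by rewrite -ta -tb c1_add_c2 size_tuple.
have size_t0 : size (nseq a ord0 ++ nseq b ord_max : seq 'I_2) == s.
  by rewrite size_cat !size_nseq ab_s.
set t0 := Tuple size_t0.
have [t0a t0b] : c1 t0 = a /\ c2 t0 = b.
  by rewrite /c1 /c2 /= !count_cat !count_nseq /=; split; lia.
rewrite (eq_bigl [pred u : s.-tuple 'I_2 | perm_eq u t0]) => [|u]; last first.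
  by rewrite /= perm_eq_counts t0a t0b.
rewrite (eq_bigr (fun _ => (nrearr t0)%:R^-1)) => [|u /= ut0]; last first.
  by rewrite /nrearr (perm_size (perm_permutations ut0)).
rewrite sumr_const card_perm_tuples ?size_tuple // -(mulr_natr _ (size _)).
rewrite mulVf // pnatr_eq0 -lt0n -has_predT; apply/hasP.
by exists (t0 : seq 'I_2); rewrite ?mem_permutations.
Qed.

Lemma sum_tuple_counts (F : nat -> R) (k a b : nat) :
  \sum_(s < k.+1) \sum_(t : s.-tuple 'I_2 | (c1 t == a) && (c2 t == b))
      F s / (nrearr t)%:R
    = (a + b <= k)%:R * F (a + b)%N.
Proof.
under eq_bigr => s _ do rewrite -mulr_sumr sum_inv_nrearr.
have [ab_k | k_ab] := leqP (a + b) k.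
  rewrite (bigD1 (Ordinal (ab_k : (a + b < k.+1)%N))) //= eqxx mulr1 mul1r.
  rewrite big1 ?addr0 // => s; rewrite -(inj_eq val_inj) /= eq_sym => /negPf->.
  by rewrite mulr0.
rewrite mul0r big1 // => s _; rewrite (_ : (a + b == s) = false) ?mulr0 //.
by apply/negbTE; rewrite neq_ltn (leq_trans (ltn_ord s) k_ab) orbT.
Qed.

Lemma order_cons (j : 'I_2) (a b : nat) :
  ((nat_of_ord j == 0%N) + a + ((nat_of_ord j == 1%N) + b))%N = (a + b).+1.
Proof. by case: j => -[|[|//]] /= _; rewrite ?add1n ?addnS. Qed.

Lemma Sop_coord (k : nat) (j : 'I_2) (w : Defs.form R n) p al a b :
  Sop k j w p al a b = (a + b <= k)%:R * (a + b).+1%:R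
    * w p al ((nat_of_ord j == 0%N) + a)%N ((nat_of_ord j == 1%N) + b)%N.
Proof.
rewrite /Sop -mulrA -(sum_tuple_counts (fun s => s.+1%:R
  * w p al ((nat_of_ord j == 0%N) + a)%N ((nat_of_ord j == 1%N) + b)%N)).
apply: eq_bigr => s _.
rewrite [RHS]big_mkcond; apply: eq_bigr => t _.
by case: ifP => // /andP[/eqP <- /eqP <-]; rewrite mulrAC.
Qed.

Lemma Tcomp_coord (k : nat) (j : 'I_2) (p : pt R n) al a b :
  Tcomp k j p al a b = (a + b <= k)%:R
    * p al ((nat_of_ord j == 0%N) + a)%N ((nat_of_ord j == 1%N) + b)%N.
Proof.
rewrite /Tcomp -(sum_tuple_counts
  (fun=> p al ((nat_of_ord j == 0%N) + a)%N ((nat_of_ord j == 1%N) + b)%N)).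
apply: eq_bigr => s _.
rewrite [RHS]big_mkcond; apply: eq_bigr => t _.
by case: ifP => // /andP[/eqP <- /eqP <-]; rewrite mulrC.
Qed.

Lemma Sop_comm (k : nat) (i m : 'I_2) (w : Defs.form R n) p al a b :
  Sop k i (Sop k m w) p al a b = Sop k m (Sop k i w) p al a b.
Proof.
rewrite !Sop_coord !order_cons.
by rewrite (addnCA (nat_of_ord i == 0%N)) (addnCA (nat_of_ord i == 1%N)).
Qed.

Lemma pd_cst (f : pt R n -> R) al a b p c :
  (forall x, f (upd p al a b x) = c) -> pd f al a b p = 0.
Proof.
move=> fc; rewrite /pd (_ : (fun x => _) = cst c) ?derive1_cst //.
by apply: funext => x; rewrite fc.
Qed.

Lemma pd_coord (al be : 'I_n) c d a b (p : pt R n) :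
  pd (fun q => q al c d) be a b p = ((al == be) && (c == a) && (d == b))%:R.
Proof.
rewrite /pd /upd; case: (_ && _ && _); [exact: derive1_id | exact: derive1_cst].
Qed.

Lemma dop_order0 (k : nat) (j : 'I_2) (w : Defs.form R n) p be a b :
  (forall q al c d, (0 < c + d)%N -> w q al c d = 0) -> (0 < a + b)%N ->
  dop k j w p be a b
    = ((a == (nat_of_ord j == 0%N)) && (b == (nat_of_ord j == 1%N)))%:R
      * w p be 0%N 0%N.
Proof.
move=> w_order0 ab_pos; rewrite /dop /Tapp.
rewrite [X in X + _]big1 ?add0r => [|al _]; last first.
  apply: big1 => s _; apply: big1 => t _.
  by rewrite (@pd_cst _ _ _ _ _ 0) ?mulr0 // => x; rewrite w_order0.
rewrite (eq_bigr (fun al => w p al 0%N 0%N * ((al == be)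
    && ((nat_of_ord j == 0%N) == a :> nat) && ((nat_of_ord j == 1%N) == b :> nat))%:R))
  => [|al _]; last first.
  rewrite big_ord_recl [X in _ + X]big1 ?addr0 => [|a' _]; last first.
    by apply: big1 => b' _; rewrite w_order0 ?mul0r.
  rewrite big_ord_recl [X in _ + X]big1 ?addr0 => [|b' _]; last first.
    by rewrite w_order0 ?mul0r.
  rewrite (_ : (fun q : pt R n => Tcomp k j q al _ _)
             = fun q : pt R n => q al (nat_of_ord j == 0%N) (nat_of_ord j == 1%N)).
    by rewrite pd_coord.
  by apply: funext => q; rewrite Tcomp_coord mul1r !addn0.
rewrite (bigD1 be) //= big1 ?addr0 => [|al /negPf->]; last by rewrite mulr0.
by rewrite eqxx mulrC [a == _]eq_sym [b == _]eq_sym.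
Qed.

End Coordinates.

Section SecondOrderLagrangian.
Variables (R : realType) (n : nat) (L : pt R n -> R).
Hypothesis L_second_order : second_order L.

Lemma dfun_eq0 p al a b : (2 < a + b)%N -> dfun L p al a b = 0.
Proof.
move=> ab_gt2; apply: (@pd_cst _ _ _ _ _ _ _ (L p)) => x.
apply: L_second_order => be c d cd_le2; rewrite /upd.
case: ifP => // /andP[/andP[_ /eqP ca] /eqP db].
by move: ab_gt2; rewrite -ca -db ltnNge cd_le2.
Qed.

Lemma Sop_dfun_eq0 k m p al a b : (1 < a + b)%N -> Sop k m (dfun L) p al a b = 0.
Proof. by move=> ab_gt1; rewrite Sop_coord dfun_eq0 ?mulr0 ?order_cons. Qed.

Lemma SopSop_dfun_eq0 k j m p al a b : (0 < a + b)%N ->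
  Sop k j (Sop k m (dfun L)) p al a b = 0.
Proof. by move=> ab_pos; rewrite Sop_coord Sop_dfun_eq0 ?mulr0 ?order_cons. Qed.

Lemma sum_dop_SopSop_dfun k m p al a b : (0 < a + b)%N ->
  \sum_(j < 2) dop k j (Sop k j (Sop k m (dfun L))) p al a b
    = Sop k m (dfun L) p al a b.
Proof.
move=> ab_pos; rewrite big_ord_recl big_ord1.
have Sop_at0 j : Sop k j (Sop k m (dfun L)) p al 0%N 0%N
    = Sop k m (dfun L) p al (nat_of_ord j == 0%N) (nat_of_ord j == 1%N).
  by rewrite Sop_coord /= !mul1r !addn0.
rewrite !dop_order0 //; try by move=> *; exact: SopSop_dfun_eq0.
rewrite !Sop_at0 /=.
case: a b ab_pos => [|[|a]] [|[|b]] //= _; rewrite ?mul1r ?mul0r ?addr0 ?add0r //;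
  by rewrite Sop_dfun_eq0.
Qed.

Lemma hilbert_pos_order m p al a b : (0 < a + b)%N ->
  hilbert L m p al a b = 2^-1 * Sop 2 m (dfun L) p al a b.
Proof.
by move=> ab_pos; rewrite /hilbert sum_dop_SopSop_dfun //; field.
Qed.

End SecondOrderLagrangian.

Theorem lemma6 (R : realType) (n : nat) (L : pt R n -> R) :
  second_order L ->
  (forall (i m : 'I_2) (p : pt R n) (al : 'I_n) (a b : nat),
      Sop 2 i (hilbert L m) p al a b
      = 2^-1 * Sop 2 i (Sop 2 m (dfun L)) p al a b) /\
  (forall (i m : 'I_2) (p : pt R n) (al : 'I_n) (a b : nat),
      Sop 2 i (hilbert L m) p al a b = Sop 2 m (hilbert L i) p al a b).
Proof.
move=> L_second_order.
have Sop_hilbert i m p al a b : Sop 2 i (hilbert L m) p al a b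
    = 2^-1 * Sop 2 i (Sop 2 m (dfun L)) p al a b.
  rewrite [LHS]Sop_coord [in RHS]Sop_coord.
  by rewrite (@hilbert_pos_order _ _ _ L_second_order) ?order_cons // mulrCA.
split=> [|i m p al a b]; first exact: Sop_hilbert.
by rewrite !Sop_hilbert Sop_comm.
Qed.
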